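(* (Local Lipschitz continuity of the backstepping control kernel operators.) For every $\bar\tau>0$ and every $M>0$ there exist constants $L_K,L_J,L_L>0$ such that for all $\tau_1,\tau_2\in(0,\bar\tau]$, all $\eta_1\in(0,\tau_1)$, $\eta_2\in(0,\tau_2)$, all $f_1,f_2\in C^1(\mathcal T_1)$ and all $c_1,c_2\in\underline C$ with $\|f_i\|_{C^1(\mathcal T_1)}\le M$ and $\|c_i\|_{C^1[0,1]}\le M$ ($i=1,2$): \begin{align*} \|\mathcal K(\tau_1,f_1,c_1)-\mathcal K(\tau_2,f_2,c_2)\|&\le L_K\max\{|\tau_1-\tau_2|,\|f_1-f_2\|,\|c_1-c_2\|\},\\ \|\mathcal L(\tau_1,\eta_1,f_1,c_1)-\mathcal L(\tau_2,\eta_2,f_2,c_2)\|&\le L_L\max\{|\tau_1-\tau_2|,|\eta_1-\eta_2|,\|f_1-f_2\|,\|c_1-c_2\|\},\\ \|\mathcal J(\tau_1,f_1,c_1)-\mathcal J(\tau_2,f_2,c_2)\|&\le L_J\max\{|\tau_1-\tau_2|,\|f_1-f_2\|,\|c_1-c_2\|\}, \end{align*} where on the left the sup norm is over $\mathcal T_1$ for $\mathcal K$ and over $[0,1]$ for $\mathcal L,\mathcal J$ (both vanish on $[1,\infty)$), and on the right $\|\cdot\|$ are sup norms.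
   Context: Notation: $\mathcal T_1=\{(s,q):0\le s\le q\le 1\}$; $\underline C=\{c\in C^1[0,1]:c(1)=0\}$; $\|g\|$ denotes the sup norm of $g$ over its domain. Control kernels: given a delay $\tau>0$, $f\in C^1(\mathcal T_1)$ and $c\in\underline C$, let $K\in C^0(\mathcal T_1)$ be the unique continuous solution of the integral equation $$K(s,q)=-\int_s^{s+1-q}f(\theta,\theta-s+q)\,d\theta+\int_s^{s+1-q}\!\int_\theta^{\theta-s+q}f(r,\theta-s+q)K(\theta,r)\,dr\,d\theta+\mathbf 1_{\{s+\tau<q\}}\Big(-c(s-q+1+\tau)+\int_{s-q+1+\tau}^1c(\theta)K(s-q+1+\tau,\theta)\,d\theta\Big),$$ which is the characteristic form of $K_s+K_q=f(s,q)-\int_s^qK(s,r)f(r,q)\,dr$ on $\mathcal T_1$ with $K(s,1)=\int_{s+\tau}^1K(s+\tau,\theta)c(\theta)d\theta-c(s+\tau)$ if $s+\tau<1$ and $K(s,1)=0$ if $s+\tau\ge1$. Define $J(\sigma)=\int_\sigma^1K(\sigma,q)c(q)\,dq-c(\sigma)$ for $0\le\sigma<1$ and $J(\sigma)=0$ for $\sigma\ge1$; and for $\eta>0$ define $L(\phi)=J(\phi+\eta)$ for $0\le\phi<1$ and $L(\phi)=0$ for $\phi\ge1$. The kernel operators are $\mathcal K(\tau,f,c):=K$, $\mathcal J(\tau,f,c):=J$, $\mathcal L(\tau,\eta,f,c):=L$. *)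

From Stdlib Require Import Reals.
From Coquelicot Require Import Coquelicot.
Open Scope R_scope.

Definition T1 (p : R * R) : Prop := 0 <= fst p /\ fst p <= snd p /\ snd p <= 1.

(* f is C^1: partial derivatives fs (in s) and fq (in q) exist and are continuous.
   (f is given on all of R^2; only its values on T1 matter.) *)
Definition C1_2 (f fs fq : R -> R -> R) : Prop :=
  (forall s q, is_derive (fun x => f x q) s (fs s q)) /\
  (forall s q, is_derive (fun y => f s y) q (fq s q)) /\
  (forall p : R * R, continuous (fun z : R * R => fs (fst z) (snd z)) p) /\
  (forall p : R * R, continuous (fun z : R * R => fq (fst z) (snd z)) p).

Definition C1_1 (c dc : R -> R) : Prop :=
  (forall x, is_derive c x (dc x)) /\ (forall x, continuous dc x).

Definition C1_norm_le_T1 (f fs fq : R -> R -> R) (M : R) : Prop :=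
  forall s q, T1 (s, q) -> Rabs (f s q) <= M /\ Rabs (fs s q) <= M /\ Rabs (fq s q) <= M.

Definition C1_norm_le_01 (c dc : R -> R) (M : R) : Prop :=
  forall x, 0 <= x <= 1 -> Rabs (c x) <= M /\ Rabs (dc x) <= M.

Definition kernel_eq (tau : R) (f : R -> R -> R) (c : R -> R) (K : R -> R -> R) : Prop :=
  forall s q, T1 (s, q) ->
    K s q =
      - RInt (fun th => f th (th - s + q)) s (s + 1 - q)
      + RInt (fun th => RInt (fun r => f r (th - s + q) * K th r) th (th - s + q))
             s (s + 1 - q)
      + (if Rlt_dec (s + tau) q then
           - c (s - q + 1 + tau)
           + RInt (fun th => c th * K (s - q + 1 + tau) th) (s - q + 1 + tau) 1
         else 0).

Definition is_kernel (tau : R) (f : R -> R -> R) (c : R -> R) (K : R -> R -> R) : Prop :=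
  continuous_on T1 (fun p : R * R => K (fst p) (snd p)) /\ kernel_eq tau f c K.

(* J = \mathcal J(tau,f,c), computed from K = \mathcal K(tau,f,c). *)
Definition Jfun (K : R -> R -> R) (c : R -> R) (sigma : R) : R :=
  if Rlt_dec sigma 1 then RInt (fun q => K sigma q * c q) sigma 1 - c sigma else 0.

Definition Lfun (K : R -> R -> R) (c : R -> R) (eta phi : R) : R :=
  if Rlt_dec phi 1 then Jfun K c (phi + eta) else 0.

(* All kernels are extended from the triangle T1 to the plane by a 1-Lipschitz
   retraction (Kext), so that the kernel equation becomes the fixed-point system
     K = - line_int f + double_int f K + J(K)(s - q + 1 + tau),
     J(K)(sg) = int_sg^1 K(sg, q) c(q) dq - c(sg),
   with integrands that are continuous on the whole plane.  The central tool is
   a weighted Gronwall lemma (weighted_gronwall): in the norm with the weight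
   exp(lam (1 - s)) this system is a contraction up to its inhomogeneity A, so
   any a priori bounded solution is bounded by A * Gam M.  Applied to a single
   kernel it gives a bound depending only on M (Kext_bound); with the
   characteristic structure of the equation this makes J Lipschitz
   (Jext_lipschitz).  Applied to the difference of two kernels, whose
   inhomogeneity is O(d) by the previous two facts, it gives the Lipschitz
   estimates for K and J; the estimate for L follows from those for J. *)
From Stdlib Require Import Reals Lra.
From Coquelicot Require Import Coquelicot.
Open Scope R_scope.

(* Continuity of a real function of one real variable, with the uniform
   structures fixed so that Coquelicot's closure lemmas apply directly. *)
Notation contR f x := (@continuous R_UniformSpace R_UniformSpace f x).

Lemma contR_plus (f g : R -> R) x : contR f x -> contR g x -> contR (fun y => f y + g y) x.
Proof. exact (@continuous_plus R_UniformSpace R_AbsRing R_NormedModule f g x). Qed.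
Lemma contR_minus (f g : R -> R) x : contR f x -> contR g x -> contR (fun y => f y - g y) x.
Proof. exact (@continuous_minus R_UniformSpace R_AbsRing R_NormedModule f g x). Qed.
Lemma contR_mult (f g : R -> R) x : contR f x -> contR g x -> contR (fun y => f y * g y) x.
Proof. exact (@continuous_mult R_UniformSpace R_AbsRing f g x). Qed.
Lemma contR_const (c x : R) : contR (fun _ => c) x.
Proof. exact (@continuous_const R_UniformSpace R_UniformSpace c x). Qed.
Lemma contR_id (x : R) : contR (fun y => y) x.
Proof. exact (@continuous_id R_UniformSpace x). Qed.

Lemma lt_Rmin z x y : z < Rmin x y -> z < x /\ z < y.
Proof. intros H. split; eapply Rlt_le_trans; eauto using Rmin_l, Rmin_r. Qed.

Lemma contR_ext (f g : R -> R) x : (forall t : R, f t = g t) -> contR f x -> contR g x.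
Proof. intros H. apply continuous_ext, H. Qed.

Lemma contR_affine a b x : contR (fun t => a * t + b) x.
Proof. apply contR_plus; [apply contR_mult; [apply contR_const|apply contR_id]|apply contR_const]. Qed.

Lemma contR_exp_affine a b x : contR (fun t => exp (a * t + b)) x.
Proof. apply (continuous_comp (fun t => a * t + b) exp); [apply contR_affine|apply continuous_exp]. Qed.

Lemma ex_RInt_contR (f : R -> R) a b : (forall x, contR f x) -> ex_RInt f a b.
Proof. intros H. apply (@ex_RInt_continuous R_CompleteNormedModule). intros; apply H. Qed.

Definition cont2 (F : R -> R -> R) := forall x y, continuity_2d_pt F x y.

Notation RR := (prod_UniformSpace R_UniformSpace R_UniformSpace).
Notation contRR F p := (@continuous RR R_UniformSpace (fun z : R * R => F (fst z) (snd z)) p).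

Lemma cont2_filter F : cont2 F <-> forall p, contRR F p.
Proof.
  split; intros H.
  - intros [x y]. apply continuity_2d_pt_filterlim, H.
  - intros x y. apply continuity_2d_pt_filterlim, (H (x, y)).
Qed.

Lemma cont2_mult F G : cont2 F -> cont2 G -> cont2 (fun x y => F x y * G x y).
Proof.
  rewrite !cont2_filter. intros HF HG p.
  exact (@continuous_mult RR R_AbsRing _ _ p (HF p) (HG p)).
Qed.

Lemma cont2_minus F G : cont2 F -> cont2 G -> cont2 (fun x y => F x y - G x y).
Proof.
  rewrite !cont2_filter. intros HF HG p.
  exact (@continuous_minus RR R_AbsRing R_NormedModule _ _ p (HF p) (HG p)).
Qed.

Lemma cont2_comp F G1 G2 : cont2 F -> cont2 G1 -> cont2 G2 -> cont2 (fun x y => F (G1 x y) (G2 x y)).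
Proof.
  rewrite !cont2_filter. intros HF H1 H2 p.
  apply (@continuous_comp_2 RR R_UniformSpace R_UniformSpace R_UniformSpace
     (fun z => G1 (fst z) (snd z)) (fun z => G2 (fst z) (snd z)) F p (H1 p) (H2 p)).
  exact (HF (G1 (fst p) (snd p), G2 (fst p) (snd p))).
Qed.

Lemma cont2_plus F G : cont2 F -> cont2 G -> cont2 (fun x y => F x y + G x y).
Proof.
  rewrite !cont2_filter. intros HF HG p.
  exact (@continuous_plus RR R_AbsRing R_NormedModule _ _ p (HF p) (HG p)).
Qed.

Lemma cont2_fst : cont2 (fun x y => x).
Proof. apply cont2_filter. intros p. apply continuous_fst. Qed.
Lemma cont2_snd : cont2 (fun x y => y).
Proof. apply cont2_filter. intros p. apply continuous_snd. Qed.

Lemma cont2_lift1 (g : R -> R) : (forall x, contR g x) -> cont2 (fun x y => g x).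
Proof.
  intros H. apply cont2_filter. intros p.
  apply (continuous_comp (fun z : R * R => fst z) g); [apply continuous_fst|apply H].
Qed.

Lemma cont2_curve (F : R -> R -> R) (g1 g2 : R -> R) x :
  cont2 F -> contR g1 x -> contR g2 x -> contR (fun y => F (g1 y) (g2 y)) x.
Proof.
  intros HF H1 H2. apply (continuous_comp_2 g1 g2 F); auto.
  apply continuity_2d_pt_filterlim, HF.
Qed.

Lemma cont2_section F x : cont2 F -> forall y, contR (fun t => F x t) y.
Proof. intros H y. apply (cont2_curve F (fun _ => x) (fun t => t)); auto using contR_const, contR_id. Qed.

Lemma derive_contR (g dg : R -> R) x : is_derive g x (dg x) -> contR g x.
Proof. intros H. apply (@ex_derive_continuous R_AbsRing R_NormedModule). exists (dg x). exact H. Qed.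

Lemma mean_value_bound (g dg : R -> R) a b B :
  (forall x, is_derive g x (dg x)) ->
  (forall x, Rmin a b <= x <= Rmax a b -> Rabs (dg x) <= B) ->
  Rabs (g b - g a) <= B * Rabs (b - a).
Proof.
  intros Hd HB.
  destruct (MVT_gen g a b dg) as [xi [Hxi ->]].
  - intros x _. apply Hd.
  - intros x _. apply continuity_pt_filterlim, (derive_contR g dg), Hd.
  - rewrite Rabs_mult. apply Rmult_le_compat_r; [apply Rabs_pos|apply HB, Hxi].
Qed.

(* Continuous partial derivatives make f jointly continuous: the s-increment is
   controlled by the mean value inequality with fs bounded near (x, y), the
   q-increment by continuity of f along the vertical line through x. *)
Lemma C1_2_cont2 f fs fq : C1_2 f fs fq -> cont2 f.
Proof.
  intros [Hs [Hq [Cs _]]] x y eps.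
  assert (Hfs : cont2 fs) by (apply cont2_filter; intros p; apply Cs).
  destruct (Hfs x y (mkposreal 1 Rlt_0_1)) as [d1 H1]. simpl in H1.
  assert (Hv : contR (fun v => f x v) y) by (apply (derive_contR _ (fun v => fq x v)), Hq).
  apply continuity_pt_filterlim in Hv.
  destruct (proj1 (continuity_pt_locally _ _) Hv (pos_div_2 eps)) as [d2 H2].
  set (Bs := Rabs (fs x y) + 1).
  assert (HBs : 0 < Bs) by (unfold Bs; generalize (Rabs_pos (fs x y)); lra).
  assert (Hd3 : 0 < eps / (2 * Bs)) by (apply Rdiv_lt_0_compat; [apply cond_pos | lra]).
  exists (mkposreal _ (Rmin_pos _ _ (Rmin_pos _ _ (cond_pos d1) (cond_pos d2)) Hd3)). simpl.
  intros u v Hu Hv'.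
  apply lt_Rmin in Hu as [Hu Hu3]; apply lt_Rmin in Hu as [Hu1 _].
  apply lt_Rmin in Hv' as [Hv' _]; apply lt_Rmin in Hv' as [Hv1 Hv2].
  assert (Hinc_s : Rabs (f u v - f x v) <= Bs * Rabs (u - x)).
  { apply (mean_value_bound (fun t => f t v) (fun t => fs t v)); [intros t; apply Hs|].
    intros t Ht. left.
    assert (Ht' : Rabs (t - x) < d1).
    { apply Rle_lt_trans with (Rabs (u - x)); [|exact Hu1].
      unfold Rmin, Rmax in Ht; destruct (Rle_dec x u); unfold Rabs; repeat destruct Rcase_abs; lra. }
    specialize (H1 t v Ht' Hv1). unfold Bs.
    replace (fs t v) with ((fs t v - fs x y) + fs x y) by ring.
    eapply Rle_lt_trans; [apply Rabs_triang|lra]. }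
  assert (Hinc_q := H2 v Hv2). simpl in Hinc_q.
  assert (Bs * Rabs (u - x) <= eps / 2).
  { replace (eps / 2) with (Bs * (eps / (2 * Bs))) by (field; lra).
    apply Rmult_le_compat_l; lra. }
  replace (f u v - f x y) with ((f u v - f x v) + (f x v - f x y)) by ring.
  eapply Rle_lt_trans; [apply Rabs_triang|]. lra.
Qed.

Lemma C1_1_contR c dc : C1_1 c dc -> forall x, contR c x.
Proof. intros [H _] x. apply (derive_contR c dc), H. Qed.

Lemma C1_1_lipschitz c dc M : C1_1 c dc -> C1_norm_le_01 c dc M ->
  forall x y, 0 <= x <= 1 -> 0 <= y <= 1 -> Rabs (c x - c y) <= M * Rabs (x - y).
Proof.
  intros [Hd _] HM x y Hx Hy. apply (mean_value_bound c dc y x M Hd).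
  intros t Ht. apply HM. split.
  - eapply Rle_trans; [|apply Ht]. apply Rmin_glb; lra.
  - eapply Rle_trans; [apply Ht|]. apply Rmax_lub; lra.
Qed.

Lemma RInt_abs_bound (f : R -> R) a b C : ex_RInt f a b ->
  (forall t, Rmin a b <= t <= Rmax a b -> Rabs (f t) <= C) -> Rabs (RInt f a b) <= Rabs (b - a) * C.
Proof.
  intros He Hb. destruct (Rle_dec a b).
  - rewrite (Rabs_right (b - a)) by lra. apply abs_RInt_le_const; auto.
    intros t Ht. apply Hb. rewrite Rmin_left, Rmax_right; lra.
  - rewrite <- (opp_RInt_swap f b a) by (apply ex_RInt_swap; auto).
    change (Rabs (- RInt f b a) <= Rabs (b - a) * C).
    rewrite Rabs_Ropp, (Rabs_left (b - a)), Ropp_minus_distr by lra.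
    apply abs_RInt_le_const; [lra|apply ex_RInt_swap; auto|].
    intros t Ht. apply Hb. rewrite Rmin_right, Rmax_left; lra.
Qed.

Lemma RInt_abs_le (f g : R -> R) a b : a <= b -> ex_RInt f a b -> ex_RInt g a b ->
  (forall x, a <= x <= b -> Rabs (f x) <= g x) -> Rabs (RInt f a b) <= RInt g a b.
Proof.
  intros Hab Hf Hg H. apply Rabs_le. split.
  - assert (E := RInt_opp (V := R_CompleteNormedModule) g a b Hg). simpl in E. unfold opp in E; simpl in E.
    rewrite <- E. apply RInt_le; auto.
    + apply (ex_RInt_opp (V := R_NormedModule)) in Hg. exact Hg.
    + intros x Hx. specialize (H x ltac:(lra)). generalize (Rle_abs (- f x)). rewrite Rabs_Ropp. lra.
  - apply RInt_le; auto. intros x Hx. specialize (H x ltac:(lra)). eapply Rle_trans; [apply Rle_abs|exact H].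
Qed.

Lemma RInt_const_plus_exp C1 C2 p r a b : p <> 0 ->
  RInt (fun t => C1 + C2 * exp (p * t + r)) a b = C1 * (b - a) + C2 * (exp (p * b + r) - exp (p * a + r)) / p.
Proof.
  intros Hp. apply is_RInt_unique.
  replace (C1 * (b - a) + C2 * (exp (p * b + r) - exp (p * a + r)) / p)
    with (minus ((fun t => C1 * t + C2 * exp (p * t + r) / p) b) ((fun t => C1 * t + C2 * exp (p * t + r) / p) a))
    by (unfold minus, plus, opp; simpl; field; exact Hp).
  apply (is_RInt_derive (V := R_CompleteNormedModule) (fun t => C1 * t + C2 * exp (p * t + r) / p)).
  - intros x _. auto_derive; [auto|field; exact Hp].
  - intros x _. apply contR_plus; [apply contR_const|apply contR_mult; [apply contR_const|apply contR_exp_affine]].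
Qed.

(* A function whose oscillation on steps shorter than delta is below 1 is
   bounded on [c, d]: walk from c to y in steps of length delta / 2. *)
Lemma bounded_by_oscillation (g : R -> R) c d (delta : posreal) :
  (forall y y', c <= y <= d -> c <= y' <= d -> Rabs (y' - y) < delta -> Rabs (g y' - g y) < 1) ->
  forall y, c <= y <= d -> Rabs (g y) <= Rabs (g c) + 2 * (d - c) / delta + 1.
Proof.
  intros Hosc.
  assert (Hd := cond_pos delta).
  assert (Walk : forall n : nat, forall y, c <= y <= d -> y <= c + INR n * (delta / 2) ->
                 Rabs (g y) <= Rabs (g c) + INR n).
  { induction n as [|n IH]; intros y Hy Hn.
    - simpl in Hn. replace y with c by lra. simpl. lra.
    - rewrite S_INR in *. destruct (Rle_dec y (c + INR n * (delta / 2))) as [Hle|Hgt].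
      + specialize (IH y Hy Hle). lra.
      + set (y' := Rmax c (y - delta / 2)).
        assert (Hy' : c <= y' <= y) by (split; [apply Rmax_l|apply Rmax_lub; lra]).
        assert (Hy'n : y' <= c + INR n * (delta / 2)).
        { assert (Hn0 := pos_INR n). apply Rmax_lub; nra. }
        specialize (IH y' ltac:(lra) Hy'n).
        assert (Hstep : Rabs (g y - g y') < 1).
        { apply Hosc; try lra. rewrite Rabs_right; [|lra].
          assert (y - delta / 2 <= y') by apply Rmax_r. lra. }
        replace (g y) with ((g y - g y') + g y') by ring.
        eapply Rle_trans; [apply Rabs_triang|lra]. }
  intros y Hy.
  destruct (nfloor_ex ((y - c) / (delta / 2))) as [n [Hn' Hn]].
  { apply Rdiv_le_0_compat; lra. }
  assert (Hyn : y <= c + INR (S n) * (delta / 2)).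
  { rewrite S_INR. apply (Rmult_lt_compat_r (delta / 2)) in Hn; [|lra].
    unfold Rdiv at 1 in Hn. rewrite Rmult_assoc, Rinv_l, Rmult_1_r in Hn by lra. lra. }
  eapply Rle_trans; [apply (Walk (S n) y Hy Hyn)|].
  rewrite S_INR. enough (INR n <= 2 * (d - c) / delta) by lra.
  apply Rle_trans with ((y - c) / (delta / 2)); [exact Hn'|].
  replace ((y - c) / (delta / 2)) with (2 * (y - c) / delta) by (field; lra).
  unfold Rdiv. apply Rmult_le_compat_r; [left; apply Rinv_0_lt_compat; lra|lra].
Qed.

Lemma cont2_bounded F a b c d : cont2 F -> a <= b -> c <= d ->
  exists B, forall x y, a <= x <= b -> c <= y <= d -> Rabs (F x y) <= B.
Proof.
  intros HF Hab Hcd.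
  destruct (uniform_continuity_2d F a b c d (fun x y _ _ => HF x y) (mkposreal 1 Rlt_0_1)) as [delta Hdelta].
  destruct (bounded_continuity (K := R_AbsRing) (fun x => F x c) a b) as [B0 HB0].
  { intros x _. apply (cont2_curve F (fun t => t) (fun _ => c)); auto using contR_id, contR_const. }
  exists (B0 + 2 * (d - c) / delta + 1). intros x y Hx Hy.
  eapply Rle_trans; [apply (bounded_by_oscillation (F x) c d delta) with (y := y); auto|].
  - intros v v' Hv Hv' Hvv. apply Hdelta; auto. rewrite Rminus_diag, Rabs_R0. apply cond_pos.
  - specialize (HB0 x Hx). change (norm (F x c)) with (Rabs (F x c)) in HB0. lra.
Qed.

(* Continuity of a parameter-dependent integral with fixed limits, from uniform
   continuity of the integrand on a compact rectangle. *)
Lemma RInt_param_contR F a b th0 : cont2 F -> contR (fun th => RInt (F th) a b) th0.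
Proof.
  intros HF. apply continuity_pt_filterlim, continuity_pt_locally. intros eps.
  set (W := Rabs (b - a) + 1).
  assert (HW : 0 < W) by (unfold W; generalize (Rabs_pos (b - a)); lra).
  assert (He := cond_pos eps).
  destruct (uniform_continuity_2d F (th0 - 1) (th0 + 1) (Rmin a b) (Rmax a b) (fun x y _ _ => HF x y)
             (mkposreal (eps / W) (Rdiv_lt_0_compat _ _ He HW))) as [delta Hdelta]. simpl in Hdelta.
  exists (mkposreal _ (Rmin_pos _ _ (cond_pos delta) Rlt_0_1)). intros th Hth.
  change (Rabs (th - th0) < Rmin delta 1) in Hth. apply lt_Rmin in Hth as [Hth1 Hth2].
  assert (Hsec : forall x a' b', ex_RInt (F x) a' b') by (intros; apply ex_RInt_contR, cont2_section, HF).
  assert (Ediff : RInt (F th) a b - RInt (F th0) a b = RInt (fun r => F th r - F th0 r) a b)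
    by (symmetry; exact (RInt_minus (V := R_CompleteNormedModule) _ _ a b (Hsec _ _ _) (Hsec _ _ _))).
  rewrite Ediff.
  eapply Rle_lt_trans.
  - apply (RInt_abs_bound _ _ _ (eps / W)).
    + apply ex_RInt_contR. intros x. apply contR_minus; apply cont2_section, HF.
    + intros t Ht. left. apply Hdelta; try lra.
      * apply Rabs_def2 in Hth2. lra.
      * rewrite Rminus_diag, Rabs_R0. apply cond_pos.
  - apply Rlt_le_trans with (W * (eps / W)); [|right; field; lra].
    apply Rmult_lt_compat_r; [apply Rdiv_lt_0_compat; lra|unfold W; lra].
Qed.

(* Continuity of an integral over the moving window [th, th + c], reduced to
   fixed limits by the translation r = u + th. *)
Lemma RInt_window_contR H c th0 : cont2 H -> contR (fun th => RInt (H th) th (th + c)) th0.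
Proof.
  intros HH.
  apply (contR_ext (fun th => RInt (fun u => H th (u + th)) 0 c)).
  - intros th.
    assert (E := RInt_comp_lin (V := R_CompleteNormedModule) (H th) 1 th 0 c).
    rewrite Rmult_0_r, Rplus_0_l, Rmult_1_l, (Rplus_comm c) in E.
    rewrite <- E by (apply ex_RInt_contR, cont2_section, HH).
    apply RInt_ext. intros u _. unfold scal; simpl; unfold mult; simpl.
    rewrite !Rmult_1_l. reflexivity.
  - apply RInt_param_contR, cont2_comp; [exact HH|apply cont2_fst|].
    apply cont2_plus; [apply cont2_snd|apply cont2_fst].
Qed.

(* The two integral operators of the characteristic form of the kernel
   equation: the forcing term integrates f along the characteristic line
   through (s, q), the Volterra term integrates a * X over the triangle below it. *)
Definition line_int (f : R -> R -> R) s q := RInt (fun th => f th (th - s + q)) s (s + 1 - q).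
Definition double_int (a X : R -> R -> R) s q :=
  RInt (fun th => RInt (fun r => a r (th - s + q) * X th r) th (th - s + q)) s (s + 1 - q).

Lemma line_integrand_contR f s q x : cont2 f -> contR (fun th => f th (th - s + q)) x.
Proof.
  intros Hf. apply (cont2_curve f (fun th => th) (fun th => th - s + q)); auto using contR_id.
  apply (contR_ext (fun th => 1 * th + (q - s))); [intros t; ring|apply contR_affine].
Qed.

Lemma line_int_ex f s q a b : cont2 f -> ex_RInt (fun th => f th (th - s + q)) a b.
Proof. intros Hf. apply ex_RInt_contR. intros x. apply line_integrand_contR, Hf. Qed.

Lemma double_integrand_cont2 a X s q : cont2 a -> cont2 X -> cont2 (fun th r => a r (th - s + q) * X th r).
Proof.
  intros Ha HX. apply cont2_mult; auto.
  apply (cont2_comp a (fun th r => r) (fun th r => th - s + q)); auto using cont2_snd.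
  apply cont2_lift1. intros x.
  apply (contR_ext (fun th => 1 * th + (q - s))); [intros t; ring|apply contR_affine].
Qed.

Lemma double_int_inner_ex a X s q th u v : cont2 a -> cont2 X ->
  ex_RInt (fun r => a r (th - s + q) * X th r) u v.
Proof.
  intros Ha HX. apply ex_RInt_contR. intros x.
  apply (cont2_section (fun th r => a r (th - s + q) * X th r)), double_integrand_cont2; auto.
Qed.

Lemma double_int_outer_ex a X s q u v : cont2 a -> cont2 X ->
  ex_RInt (fun th => RInt (fun r => a r (th - s + q) * X th r) th (th - s + q)) u v.
Proof.
  intros Ha HX. apply ex_RInt_contR. intros x.
  apply (contR_ext (fun th => RInt (fun r => a r (th - s + q) * X th r) th (th + (q - s)))).
  - intros th. f_equal. ring.
  - apply (RInt_window_contR (fun th r => a r (th - s + q) * X th r)), double_integrand_cont2; auto.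
Qed.

Lemma row_int_ex X b sg u v : cont2 X -> (forall x, contR b x) -> ex_RInt (fun th => X sg th * b th) u v.
Proof. intros HX Hb. apply ex_RInt_contR. intros x. apply contR_mult; auto. apply cont2_section, HX. Qed.

Lemma double_int_inner_bound a X Ma C s q th : cont2 a -> cont2 X -> 0 <= Ma -> 0 <= C ->
  (forall s q, T1 (s, q) -> Rabs (a s q) <= Ma) ->
  (forall r, th <= r <= th - s + q -> Rabs (X th r) <= C) ->
  T1 (s, q) -> s <= th <= s + 1 - q ->
  Rabs (RInt (fun r => a r (th - s + q) * X th r) th (th - s + q)) <= Ma * C.
Proof.
  intros Ha HX HMa HC Hab HXb Hsq Hth. unfold T1 in Hsq; simpl in Hsq.
  eapply Rle_trans; [apply (RInt_abs_bound _ _ _ (Ma * C)); [apply double_int_inner_ex; auto|]|].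
  - intros r Hr. rewrite Rmin_left in Hr by lra. rewrite Rmax_right in Hr by lra.
    rewrite Rabs_mult. apply Rmult_le_compat; try apply Rabs_pos; [apply Hab; unfold T1; simpl; lra|apply HXb; lra].
  - replace (th - s + q - th) with (q - s) by ring. rewrite Rabs_right by lra.
    assert (0 <= Ma * C) by (apply Rmult_le_pos; lra). nra.
Qed.

Lemma le_of_geometric_bounds x c N0 W : 0 < W -> 0 <= N0 ->
  (forall n, x <= (c + N0 * (/ 2) ^ n) * W) -> x <= c * W.
Proof.
  intros HW HN H. destruct (Rle_dec x (c * W)) as [?|Hn]; auto. exfalso.
  assert (He : 0 < (x - c * W) / (W * (N0 + 1))) by (apply Rdiv_lt_0_compat; nra).
  destruct (pow_lt_1_zero (/ 2) ltac:(rewrite Rabs_right; lra) _ He) as [n Hn'].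
  specialize (Hn' n (le_n n)). specialize (H n).
  assert (Hp : 0 <= (/ 2) ^ n) by (apply pow_le; lra).
  rewrite Rabs_right in Hn' by lra.
  apply (Rmult_lt_compat_r (W * (N0 + 1))) in Hn'; [|nra].
  unfold Rdiv in Hn'. rewrite Rmult_assoc, Rinv_l, Rmult_1_r in Hn' by nra.
  nra.
Qed.

Lemma exp_monotone x y : x <= y -> exp x <= exp y.
Proof. intros [H|H]; [left; apply exp_increasing, H|right; rewrite H; reflexivity]. Qed.

(* The exponential weight w(s) = exp(lam (1 - s)) of the Gronwall argument,
   with a rate lam chosen so that the Volterra and boundary terms contract by 1/2. *)
Definition rate M := 2 * (M * M + 2 * M) + 1.
Definition weight M s := exp (rate M * (1 - s)).
Definition Gam M := 2 * (2 + M) * exp (rate M).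

Lemma rate_pos M : 0 <= M -> 0 < rate M.
Proof. intros HM. unfold rate. nra. Qed.

Lemma weight_pos M s : 0 < weight M s.
Proof. apply exp_pos. Qed.

Lemma weight_ge1 M s : 0 <= M -> s <= 1 -> 1 <= weight M s.
Proof.
  intros HM Hs. unfold weight. rewrite <- exp_0 at 1. apply exp_monotone.
  apply Rmult_le_pos; [left; apply rate_pos, HM|lra].
Qed.

Lemma weight_le_max M s : 0 <= M -> 0 <= s -> weight M s <= exp (rate M).
Proof.
  intros HM Hs. unfold weight. apply exp_monotone.
  assert (H := rate_pos M HM). rewrite <- (Rmult_1_r (rate M)) at 2.
  apply Rmult_le_compat_l; lra.
Qed.

Lemma weight_antitone M s t : 0 <= M -> s <= t -> weight M t <= weight M s.
Proof.
  intros HM Hst. unfold weight. apply exp_monotone.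
  apply Rmult_le_compat_l; [left; apply rate_pos, HM|lra].
Qed.

Lemma Gam_pos M : 0 <= M -> 0 < Gam M.
Proof. intros HM. unfold Gam. assert (0 < exp (rate M)) by apply exp_pos. nra. Qed.

(* Weighted Gronwall lemma for the coupled system satisfied by a kernel E
   (or a difference of kernels) and its boundary trace G:
     |E(s,q)| <= A + |double_int a E (s,q)| + |G(s - q + 1 + tau)|,
     |G(sg)|  <= A + |int_sg^1 E(sg, th) b(th) dth|,   G = 0 on [1, oo).
   If E and G are a priori bounded, then both are bounded by A * Gam M.
   In the norm sup |E(s,.)| / weight M s the system is a contraction of
   ratio 1/2 up to the constant A (2 + M); iterating from the a priori bound
   gives the claim. *)
Section WeightedGronwall.

Variables (E a : R -> R -> R) (G b : R -> R) (A M tau N0 : R).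
Hypothesis A_nonneg : 0 <= A.
Hypothesis M_nonneg : 0 <= M.
Hypothesis tau_nonneg : 0 <= tau.
Hypothesis E_cont : cont2 E.
Hypothesis a_cont : cont2 a.
Hypothesis b_cont : forall x, contR b x.
Hypothesis a_bound : forall s q, T1 (s, q) -> Rabs (a s q) <= M.
Hypothesis b_bound : forall x, 0 <= x <= 1 -> Rabs (b x) <= M.
Hypothesis G_vanish : forall u, 1 <= u -> G u = 0.
Hypothesis E_apriori : forall s q, T1 (s, q) -> Rabs (E s q) <= N0.
Hypothesis G_apriori : forall u, 0 <= u < 1 -> Rabs (G u) <= N0.
Hypothesis E_ineq : forall s q, T1 (s, q) ->
  Rabs (E s q) <= A + Rabs (double_int a E s q) + Rabs (G (s - q + 1 + tau)).
Hypothesis G_ineq : forall sg, 0 <= sg < 1 ->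
  Rabs (G sg) <= A + Rabs (RInt (fun th => E sg th * b th) sg 1).

Definition weighted_bound N :=
  (forall s q, T1 (s, q) -> Rabs (E s q) <= N * weight M s) /\
  (forall u, 0 <= u < 1 -> Rabs (G u) <= N * weight M u).

Lemma G_weighted N : 0 <= N -> weighted_bound N -> forall u, 0 <= u -> Rabs (G u) <= N * weight M u.
Proof.
  intros HN [_ HG] u Hu. destruct (Rlt_dec u 1); [apply HG; lra|].
  rewrite G_vanish, Rabs_R0 by lra. apply Rmult_le_pos; [lra|left; apply weight_pos].
Qed.

(* The Volterra term gains the factor M / rate M: the weight decays along the
   characteristic, and its integral is at most weight M s / rate M. *)
Lemma volterra_weighted N : 0 <= N -> weighted_bound N ->
  forall s q, T1 (s, q) -> Rabs (double_int a E s q) <= M * N * weight M s / rate M.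
Proof.
  intros HN [HE _] s q Hsq. assert (Hsq' := Hsq). unfold T1 in Hsq'; simpl in Hsq'.
  assert (Hlam := rate_pos M M_nonneg).
  unfold double_int. eapply Rle_trans.
  - apply (RInt_abs_le _ (fun t => 0 + (M * N) * exp ((- rate M) * t + rate M))); [lra| |apply ex_RInt_contR|].
    + apply double_int_outer_ex; auto.
    + intros z. apply contR_plus; [apply contR_const|apply contR_mult; [apply contR_const|apply contR_exp_affine]].
    + intros th Hth. rewrite Rplus_0_l.
      replace (- rate M * th + rate M) with (rate M * (1 - th)) by ring. fold (weight M th).
      rewrite Rmult_assoc. apply double_int_inner_bound; auto.
      * apply Rmult_le_pos; [lra|left; apply weight_pos].
      * intros r Hr. apply HE. unfold T1; simpl; lra.
  - rewrite RInt_const_plus_exp by lra.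
    replace (- rate M * (s + 1 - q) + rate M) with (rate M * (1 - (s + 1 - q))) by ring.
    replace (- rate M * s + rate M) with (rate M * (1 - s)) by ring. fold (weight M s) (weight M (s + 1 - q)).
    assert (Hw := weight_pos M (s + 1 - q)). assert (0 <= M * N) by nra.
    replace (0 * (s + 1 - q - s) + M * N * (weight M (s + 1 - q) - weight M s) / - rate M)
      with (M * N * (weight M s - weight M (s + 1 - q)) / rate M) by (field; lra).
    unfold Rdiv. apply Rmult_le_compat_r; [left; apply Rinv_0_lt_compat, Hlam|nra].
Qed.

(* Pointwise majorant of the integrand of the trace equation: E(sg, th) is
   bounded through its own equation, where the boundary term is evaluated at
   sg - th + 1 + tau and so carries the weight exp(lam th - lam (sg + tau)). *)
Lemma row_integrand_weighted N : 0 <= N -> weighted_bound N ->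
  forall sg th, 0 <= sg -> sg <= th <= 1 ->
  Rabs (E sg th * b th)
  <= M * (A + M * N * weight M sg / rate M) + M * N * exp (rate M * th + - rate M * (sg + tau)).
Proof.
  intros HN HP sg th Hsg Hth. rewrite Rabs_mult.
  assert (HT : T1 (sg, th)) by (unfold T1; simpl; lra).
  assert (H1 := E_ineq sg th HT).
  assert (H2 := volterra_weighted N HN HP sg th HT).
  assert (H3 := G_weighted N HN HP (sg - th + 1 + tau) ltac:(lra)).
  assert (H4 : weight M (sg - th + 1 + tau) = exp (rate M * th + - rate M * (sg + tau)))
    by (unfold weight; f_equal; ring).
  assert (H5 := b_bound th ltac:(lra)).
  rewrite <- H4.
  assert (0 <= Rabs (E sg th) <= A + M * N * weight M sg / rate M + N * weight M (sg - th + 1 + tau))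
    by (split; [apply Rabs_pos|lra]).
  nra.
Qed.

Lemma trace_weighted N : 0 <= N -> weighted_bound N ->
  forall sg, 0 <= sg < 1 -> Rabs (G sg) <= A * (1 + M) + (M * M + M) * N * weight M sg / rate M.
Proof.
  intros HN HP sg Hsg. assert (Hlam := rate_pos M M_nonneg).
  assert (Hws := weight_pos M sg).
  eapply Rle_trans; [apply G_ineq, Hsg|].
  set (C1 := M * (A + M * N * weight M sg / rate M)). set (C2 := M * N).
  assert (HC0 : 0 <= M * N * weight M sg / rate M).
  { unfold Rdiv. apply Rmult_le_pos; [apply Rmult_le_pos; [apply Rmult_le_pos|]; lra|].
    left; apply Rinv_0_lt_compat, Hlam. }
  assert (HC1 : 0 <= C1) by (unfold C1; apply Rmult_le_pos; lra).
  assert (HC2 : 0 <= C2) by (unfold C2; apply Rmult_le_pos; lra).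
  assert (Hint : Rabs (RInt (fun th => E sg th * b th) sg 1)
                 <= RInt (fun t => C1 + C2 * exp (rate M * t + (- rate M * (sg + tau)))) sg 1).
  { apply RInt_abs_le; [lra|apply row_int_ex; auto|apply ex_RInt_contR|].
    - intros z. apply contR_plus; [apply contR_const|apply contR_mult; [apply contR_const|apply contR_exp_affine]].
    - intros th Hth. apply row_integrand_weighted; auto; lra. }
  rewrite RInt_const_plus_exp in Hint by lra.
  assert (Hx : exp (rate M * 1 + - rate M * (sg + tau)) <= weight M sg)
    by (unfold weight; apply exp_monotone; nra).
  assert (Hy : 0 < exp (rate M * sg + - rate M * (sg + tau))) by apply exp_pos.
  assert (Hz : C2 * (exp (rate M * 1 + - rate M * (sg + tau)) - exp (rate M * sg + - rate M * (sg + tau))) / rate M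
               <= C2 * weight M sg / rate M).
  { unfold Rdiv. apply Rmult_le_compat_r; [left; apply Rinv_0_lt_compat, Hlam|nra]. }
  assert (Hc : C1 * (1 - sg) <= C1) by nra.
  replace (A * (1 + M) + (M * M + M) * N * weight M sg / rate M)
    with (A + (C1 + C2 * weight M sg / rate M)) by (unfold C1, C2; field; lra).
  lra.
Qed.

Lemma gronwall_step N : 0 <= N -> weighted_bound N -> weighted_bound (A * (2 + M) + N / 2).
Proof.
  intros HN HP. assert (Hlam := rate_pos M M_nonneg).
  assert (Hratio : (M * M + 2 * M) / rate M <= 1 / 2).
  { apply (Rmult_le_reg_r (rate M)); [exact Hlam|].
    unfold Rdiv. rewrite Rmult_assoc, Rinv_l, Rmult_1_r by lra. unfold rate. lra. }
  assert (Hnn : forall C u, 0 <= C -> 0 <= C * N * weight M u / rate M).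
  { intros C u HC. unfold Rdiv.
    apply Rmult_le_pos; [apply Rmult_le_pos; [apply Rmult_le_pos|left; apply weight_pos]|left; apply Rinv_0_lt_compat]; lra. }
  assert (Hgain : forall C u, 0 <= C <= M * M + 2 * M -> C * N * weight M u / rate M <= N / 2 * weight M u).
  { intros C u HC. assert (Hw := weight_pos M u).
    replace (C * N * weight M u / rate M) with (C / rate M * (N * weight M u)) by (field; lra).
    replace (N / 2 * weight M u) with (1 / 2 * (N * weight M u)) by field.
    apply Rmult_le_compat_r; [nra|].
    apply Rle_trans with ((M * M + 2 * M) / rate M); [|exact Hratio].
    unfold Rdiv. apply Rmult_le_compat_r; [left; apply Rinv_0_lt_compat, Hlam|lra]. }
  split.
  - intros s q Hsq. assert (Hsq' := Hsq). unfold T1 in Hsq'; simpl in Hsq'.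
    assert (HV := volterra_weighted N HN HP s q Hsq).
    assert (HGs : Rabs (G (s - q + 1 + tau)) <= A * (1 + M) + (M * M + M) * N * weight M s / rate M).
    { destruct (Rlt_dec (s - q + 1 + tau) 1).
      - eapply Rle_trans; [apply (trace_weighted N HN HP); lra|].
        apply Rplus_le_compat_l. unfold Rdiv. apply Rmult_le_compat_r; [left; apply Rinv_0_lt_compat, Hlam|].
        apply Rmult_le_compat_l; [apply Rmult_le_pos; nra|apply weight_antitone; lra].
      - rewrite G_vanish, Rabs_R0 by lra.
        assert (0 <= (M * M + M) * N * weight M s / rate M) by (apply Hnn; nra).
        nra. }
    assert (Hw1 := weight_ge1 M s M_nonneg ltac:(lra)).
    assert (Hg := Hgain (M * M + 2 * M) s ltac:(nra)).
    assert (Hsum : M * N * weight M s / rate M + (M * M + M) * N * weight M s / rate M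
                   = (M * M + 2 * M) * N * weight M s / rate M) by (field; lra).
    assert (HA : A * (2 + M) * 1 <= A * (2 + M) * weight M s) by (apply Rmult_le_compat_l; nra).
    eapply Rle_trans; [apply E_ineq, Hsq|]. lra.
  - intros u Hu. eapply Rle_trans; [apply (trace_weighted N HN HP u Hu)|].
    assert (Hw1 := weight_ge1 M u M_nonneg ltac:(lra)).
    assert (Hg := Hgain (M * M + M) u ltac:(nra)).
    assert (HA : A * (2 + M) * 1 <= A * (2 + M) * weight M u) by (apply Rmult_le_compat_l; nra).
    lra.
Qed.

(* Iterating the step from the a priori bound N0, the weighted bounds
   2 A (2 + M) + N0 / 2^n tend to 2 A (2 + M), and weight M s <= exp (rate M). *)
Theorem weighted_gronwall :
  (forall s q, T1 (s, q) -> Rabs (E s q) <= A * Gam M) /\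
  (forall u, 0 <= u -> Rabs (G u) <= A * Gam M).
Proof.
  set (B := A * (2 + M)). assert (HB : 0 <= B) by (unfold B; nra).
  assert (HN0 : 0 <= N0).
  { apply Rle_trans with (Rabs (E 0 0)); [apply Rabs_pos|apply E_apriori; unfold T1; simpl; lra]. }
  assert (Hpos : forall n, 0 <= 2 * B + N0 * (/ 2) ^ n).
  { intros n. assert (0 <= (/ 2) ^ n) by (apply pow_le; lra). nra. }
  assert (Iter : forall n, weighted_bound (2 * B + N0 * (/ 2) ^ n)).
  { induction n as [|n IH].
    - simpl. split.
      + intros s q Hsq. assert (Hw := weight_ge1 M s M_nonneg ltac:(unfold T1 in Hsq; simpl in Hsq; lra)).
        specialize (E_apriori s q Hsq). nra.
      + intros u Hu. assert (Hw := weight_ge1 M u M_nonneg ltac:(lra)). specialize (G_apriori u Hu). nra.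
    - replace (2 * B + N0 * (/ 2) ^ S n) with (B + (2 * B + N0 * (/ 2) ^ n) / 2) by (simpl; field).
      apply gronwall_step; auto. }
  assert (Hlimit : forall x u, 0 <= u -> (forall n, x <= (2 * B + N0 * (/ 2) ^ n) * weight M u) -> x <= A * Gam M).
  { intros x u Hu Hn. apply Rle_trans with (2 * B * weight M u).
    - apply (le_of_geometric_bounds _ _ N0); auto. apply weight_pos.
    - replace (A * Gam M) with (2 * B * exp (rate M)) by (unfold Gam, B; ring).
      apply Rmult_le_compat_l; [lra|apply weight_le_max; auto]. }
  split.
  - intros s q Hsq. apply (Hlimit _ s); [unfold T1 in Hsq; simpl in Hsq; lra|].
    intros n. apply (proj1 (Iter n)), Hsq.
  - intros u Hu. apply (Hlimit _ u Hu). intros n.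
    apply (G_weighted _ (Hpos n) (Iter n) u Hu).
Qed.

End WeightedGronwall.

(* Sup-norm bounds for the two integral operators on T1 (the characteristic
   segments have length at most 1). *)
Lemma line_int_bound f C s q : cont2 f -> 0 <= C ->
  (forall s q, T1 (s, q) -> Rabs (f s q) <= C) -> T1 (s, q) -> Rabs (line_int f s q) <= C.
Proof.
  intros Hf HC Hb Hsq. unfold T1 in Hsq; simpl in Hsq. unfold line_int.
  eapply Rle_trans; [apply (RInt_abs_bound _ _ _ C); [apply line_int_ex, Hf|]|].
  - intros t Ht. rewrite Rmin_left in Ht by lra. rewrite Rmax_right in Ht by lra.
    apply Hb. unfold T1; simpl; lra.
  - replace (s + 1 - q - s) with (1 - q) by ring. rewrite Rabs_right by lra. nra.
Qed.

Lemma double_int_bound a X Ma C s q : cont2 a -> cont2 X -> 0 <= Ma -> 0 <= C ->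
  (forall s q, T1 (s, q) -> Rabs (a s q) <= Ma) -> (forall s q, T1 (s, q) -> Rabs (X s q) <= C) ->
  T1 (s, q) -> Rabs (double_int a X s q) <= Ma * C.
Proof.
  intros Ha HX HMa HC Hab HXb Hsq. unfold T1 in Hsq; simpl in Hsq. unfold double_int.
  eapply Rle_trans; [apply (RInt_abs_bound _ _ _ (Ma * C)); [apply double_int_outer_ex; auto|]|].
  - intros t Ht. rewrite Rmin_left in Ht by lra. rewrite Rmax_right in Ht by lra.
    apply double_int_inner_bound; auto. intros r Hr; apply HXb; unfold T1; simpl; lra.
  - replace (s + 1 - q - s) with (1 - q) by ring. rewrite Rabs_right by lra.
    assert (0 <= Ma * C) by (apply Rmult_le_pos; lra). nra.
Qed.

(* Extension of a kernel given on T1 to the whole plane by composing with the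
   1-Lipschitz retraction (s, q) |-> (clamp_s s, clamp_q s q) onto T1. *)
Definition clamp_s s := Rmax 0 (Rmin s 1).
Definition clamp_q s q := Rmax (clamp_s s) (Rmin q 1).
Definition Kext (K : R -> R -> R) s q := K (clamp_s s) (clamp_q s q).

Lemma clamp_T1 s q : T1 (clamp_s s, clamp_q s q).
Proof.
  unfold T1, clamp_q; simpl.
  assert (0 <= clamp_s s) by apply Rmax_l.
  assert (clamp_s s <= 1) by (apply Rmax_lub; [lra|apply Rmin_r]).
  split; [lra|split; [apply Rmax_l|apply Rmax_lub; [lra|apply Rmin_r]]].
Qed.

Lemma Kext_T1 K s q : T1 (s, q) -> Kext K s q = K s q.
Proof.
  unfold T1, Kext, clamp_q, clamp_s; simpl; intros H.
  rewrite (Rmin_left s 1), (Rmax_right 0 s), (Rmin_left q 1), (Rmax_right s q) by lra. reflexivity.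
Qed.

Lemma Rmax_lip a b c d : Rabs (Rmax a b - Rmax c d) <= Rmax (Rabs (a - c)) (Rabs (b - d)).
Proof.
  unfold Rmax; destruct (Rle_dec a b); destruct (Rle_dec c d);
  destruct (Rle_dec (Rabs (a - c)) (Rabs (b - d))); unfold Rabs in *; repeat (destruct Rcase_abs); lra.
Qed.

Lemma Rmin_lip a b c d : Rabs (Rmin a b - Rmin c d) <= Rmax (Rabs (a - c)) (Rabs (b - d)).
Proof.
  unfold Rmin, Rmax; destruct (Rle_dec a b); destruct (Rle_dec c d);
  destruct (Rle_dec (Rabs (a - c)) (Rabs (b - d))); unfold Rabs in *; repeat (destruct Rcase_abs); lra.
Qed.

Lemma clamp_s_lip u x : Rabs (clamp_s u - clamp_s x) <= Rabs (u - x).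
Proof.
  unfold clamp_s. eapply Rle_trans; [apply Rmax_lip|]. rewrite Rminus_diag, Rabs_R0.
  apply Rmax_lub; [apply Rabs_pos|]. eapply Rle_trans; [apply Rmin_lip|].
  rewrite Rminus_diag, Rabs_R0. apply Rmax_lub; [lra|apply Rabs_pos].
Qed.

Lemma clamp_q_lip u v x y d : Rabs (u - x) < d -> Rabs (v - y) < d -> Rabs (clamp_q u v - clamp_q x y) < d.
Proof.
  intros Hu Hv. unfold clamp_q. eapply Rle_lt_trans; [apply Rmax_lip|]. apply Rmax_lub_lt.
  - eapply Rle_lt_trans; [apply clamp_s_lip|exact Hu].
  - eapply Rle_lt_trans; [apply Rmin_lip|]. rewrite Rminus_diag, Rabs_R0.
    apply Rmax_lub_lt; [exact Hv|eapply Rle_lt_trans; [apply Rabs_pos|exact Hu]].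
Qed.

Lemma Kext_cont2 K : continuous_on T1 (fun p : R * R => K (fst p) (snd p)) -> cont2 (Kext K).
Proof.
  intros HK x y eps.
  specialize (HK _ (clamp_T1 x y)).
  apply (filterlim_locally (F := within T1 (locally (clamp_s x, clamp_q x y)))) with (eps := eps) in HK.
  unfold within in HK. simpl in HK.
  apply (locally_2d_locally (fun u v => T1 (u, v) -> ball (K (clamp_s x) (clamp_q x y)) eps (K u v))) in HK.
  destruct HK as [d Hd].
  exists d. intros u v Hu Hv. unfold Kext.
  apply Hd; [eapply Rle_lt_trans; [apply clamp_s_lip|exact Hu]|apply clamp_q_lip; auto|apply clamp_T1].
Qed.

Lemma Jfun_vanish X c u : 1 <= u -> Jfun X c u = 0.
Proof. intros H. unfold Jfun. destruct (Rlt_dec u 1); auto; lra. Qed.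

Lemma Jfun_lt X c u : u < 1 -> Jfun X c u = RInt (fun q => X u q * c q) u 1 - c u.
Proof. intros H. unfold Jfun. destruct (Rlt_dec u 1); auto; lra. Qed.

(* J only samples the kernel on T1, so it does not see the extension. *)
Lemma Jfun_Kext K c sg : 0 <= sg -> Jfun (Kext K) c sg = Jfun K c sg.
Proof.
  intros Hs. unfold Jfun. destruct (Rlt_dec sg 1); auto. f_equal.
  apply RInt_ext. intros x Hx. rewrite Rmin_left in Hx by lra. rewrite Rmax_right in Hx by lra.
  rewrite Kext_T1; [reflexivity|unfold T1; simpl; lra].
Qed.

(* The kernel equation in operator form: the boundary term is the trace J of the
   kernel itself at s - q + 1 + tau, which vanishes exactly when s + tau >= q. *)
Lemma Kext_eq tau f c K : is_kernel tau f c K -> 0 < tau -> forall s q, T1 (s, q) ->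
  Kext K s q = - line_int f s q + double_int f (Kext K) s q + Jfun (Kext K) c (s - q + 1 + tau).
Proof.
  intros [_ HK] Htau s q Hsq. rewrite Kext_T1, (HK s q Hsq) by exact Hsq.
  assert (H := Hsq). unfold T1 in H; simpl in H.
  unfold line_int, double_int. f_equal; [f_equal|].
  - apply RInt_ext. intros th Hth. rewrite Rmin_left in Hth by lra. rewrite Rmax_right in Hth by lra.
    apply RInt_ext. intros r Hr. rewrite Rmin_left in Hr by lra. rewrite Rmax_right in Hr by lra.
    rewrite Kext_T1; [reflexivity|unfold T1; simpl; lra].
  - unfold Jfun. destruct (Rlt_dec (s + tau) q); destruct (Rlt_dec (s - q + 1 + tau) 1); try lra.
    assert (E : RInt (fun th => c th * K (s - q + 1 + tau) th) (s - q + 1 + tau) 1 =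
                RInt (fun q0 => Kext K (s - q + 1 + tau) q0 * c q0) (s - q + 1 + tau) 1).
    { apply RInt_ext. intros x Hx. rewrite Rmin_left in Hx by lra. rewrite Rmax_right in Hx by lra.
      rewrite Kext_T1 by (unfold T1; simpl; lra). apply Rmult_comm. }
    rewrite E. ring.
Qed.

Definition kernel_bound M := M * Gam M.
Definition trace_lip M := M * (M + M * kernel_bound M) + 2 * kernel_bound M * M + M.

Lemma kernel_bound_pos M : 0 < M -> 0 < kernel_bound M.
Proof. intros HM. unfold kernel_bound. assert (H := Gam_pos M ltac:(lra)). nra. Qed.

Lemma trace_lip_pos M : 0 < M -> 0 < trace_lip M.
Proof.
  intros HM. assert (H := kernel_bound_pos M HM). unfold trace_lip.
  assert (0 < M * kernel_bound M) by nra. assert (0 < M * (M + M * kernel_bound M)) by nra. nra.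
Qed.

Lemma shifted_row_contR X c x h z : cont2 X -> (forall x, contR c x) ->
  contR (fun q => X (x + h) (q + h) * c (q + h)) z.
Proof.
  intros HX Hc.
  assert (Hsh : contR (fun q => q + h) z) by (apply (contR_ext (fun q => 1 * q + h)); [intros; ring|apply contR_affine]).
  apply contR_mult.
  - apply (cont2_curve X (fun _ => x + h) (fun q => q + h)); auto using contR_const.
  - apply (continuous_comp (fun q => q + h) c); auto.
Qed.

Lemma shifted_row_int_ex X c x h u v : cont2 X -> (forall x, contR c x) ->
  ex_RInt (fun q => X x q * c q - X (x + h) (q + h) * c (q + h)) u v.
Proof.
  intros HX Hc. apply ex_RInt_contR. intros z.
  apply contR_minus; [apply contR_mult; [apply cont2_section, HX|apply Hc]|apply shifted_row_contR; auto].
Qed.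

(* Comparing the traces at sg = x and sg = x + h: substituting q = u + h in the
   second one aligns the integrals on [x, 1 - h], leaving a piece on [1 - h, 1]. *)
Lemma Jfun_shift X c x h : cont2 X -> (forall x, contR c x) -> 0 <= h -> x + h < 1 ->
  Jfun X c x - Jfun X c (x + h)
  = RInt (fun q => X x q * c q - X (x + h) (q + h) * c (q + h)) x (1 - h)
    + RInt (fun q => X x q * c q) (1 - h) 1 - (c x - c (x + h)).
Proof.
  intros HX Hc Hh Hxh. rewrite !Jfun_lt by lra.
  assert (Ex := fun sg u v => row_int_ex X c sg u v HX Hc).
  assert (Eshift : RInt (fun q => X (x + h) q * c q) (x + h) 1
                   = RInt (fun u => X (x + h) (u + h) * c (u + h)) x (1 - h)).
  { assert (E := RInt_comp_lin (V := R_CompleteNormedModule) (fun q => X (x + h) q * c q) 1 h x (1 - h)).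
    replace (1 * x + h) with (x + h) in E by ring. replace (1 * (1 - h) + h) with 1 in E by ring.
    rewrite <- E by apply Ex. apply RInt_ext. intros u _. unfold scal; simpl; unfold mult; simpl.
    rewrite Rmult_1_l. replace (1 * u + h) with (u + h) by ring. reflexivity. }
  assert (Esplit : RInt (fun q => X x q * c q) x 1
                   = RInt (fun q => X x q * c q) x (1 - h) + RInt (fun q => X x q * c q) (1 - h) 1)
    by (symmetry; apply (RInt_Chasles (V := R_CompleteNormedModule)); apply Ex).
  assert (Exs : ex_RInt (fun u => X (x + h) (u + h) * c (u + h)) x (1 - h))
    by (apply ex_RInt_contR; intros; apply shifted_row_contR; auto).
  assert (Ediff : RInt (fun q => X x q * c q) x (1 - h) - RInt (fun u => X (x + h) (u + h) * c (u + h)) x (1 - h)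
                  = RInt (fun q => X x q * c q - X (x + h) (q + h) * c (q + h)) x (1 - h))
    by (symmetry; exact (RInt_minus (V := R_CompleteNormedModule) _ _ x (1 - h) (Ex x x (1 - h)) Exs)).
  rewrite Eshift, Esplit, <- Ediff. ring.
Qed.

Section KernelEstimates.

Variables (tau M : R) (f fs fq : R -> R -> R) (c dc : R -> R) (K : R -> R -> R).
Hypothesis tau_pos : 0 < tau.
Hypothesis M_pos : 0 < M.
Hypothesis f_C1 : C1_2 f fs fq.
Hypothesis c_C1 : C1_1 c dc.
Hypothesis f_norm : C1_norm_le_T1 f fs fq M.
Hypothesis c_norm : C1_norm_le_01 c dc M.
Hypothesis K_kernel : is_kernel tau f c K.

Let f_cont : cont2 f := C1_2_cont2 f fs fq f_C1.
Let c_cont : forall x, contR c x := C1_1_contR c dc c_C1.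
Let K_cont : cont2 (Kext K) := Kext_cont2 K (proj1 K_kernel).
Let f_bound s q (H : T1 (s, q)) : Rabs (f s q) <= M := proj1 (f_norm s q H).
Let c_bound x (H : 0 <= x <= 1) : Rabs (c x) <= M := proj1 (c_norm x H).

(* The kernel and its trace solve the Gronwall system with A = M, the a priori
   bound coming from continuity on the compact triangle. *)
Lemma Kext_bound :
  (forall s q, T1 (s, q) -> Rabs (Kext K s q) <= kernel_bound M) /\
  (forall u, 0 <= u -> Rabs (Jfun (Kext K) c u) <= kernel_bound M).
Proof.
  destruct (cont2_bounded (Kext K) 0 1 0 1 K_cont ltac:(lra) ltac:(lra)) as [B0 HB0].
  set (B1 := Rabs B0). assert (HB1p : 0 <= B1) by apply Rabs_pos.
  assert (HB1 : forall s q, T1 (s, q) -> Rabs (Kext K s q) <= B1).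
  { intros s q H. unfold T1 in H; simpl in H. eapply Rle_trans; [apply HB0; lra|apply Rle_abs]. }
  assert (Hrow : forall u, 0 <= u < 1 -> Rabs (RInt (fun q => Kext K u q * c q) u 1) <= B1 * M).
  { intros u Hu. eapply Rle_trans; [apply (RInt_abs_bound _ _ _ (B1 * M)); [apply row_int_ex; auto|]|].
    - intros t Ht. rewrite Rmin_left in Ht by lra. rewrite Rmax_right in Ht by lra.
      rewrite Rabs_mult. apply Rmult_le_compat; try apply Rabs_pos; [apply HB1; unfold T1; simpl; lra|apply c_bound; lra].
    - rewrite Rabs_right by lra. assert (0 <= B1 * M) by nra. nra. }
  unfold kernel_bound. apply (weighted_gronwall (Kext K) f (Jfun (Kext K) c) c M M tau (B1 + B1 * M + M));
    auto; try lra.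
  - apply Jfun_vanish.
  - intros s q H. assert (0 <= B1 * M) by nra. specialize (HB1 s q H). lra.
  - intros u Hu. rewrite Jfun_lt by lra. unfold Rminus. eapply Rle_trans; [apply Rabs_triang|].
    rewrite Rabs_Ropp. specialize (Hrow u Hu). specialize (c_bound u ltac:(lra)). lra.
  - intros s q H. rewrite (Kext_eq tau f c K K_kernel tau_pos s q H).
    eapply Rle_trans; [apply Rabs_triang|]. apply Rplus_le_compat_r.
    eapply Rle_trans; [apply Rabs_triang|]. rewrite Rabs_Ropp. apply Rplus_le_compat_r.
    apply line_int_bound; auto. lra.
  - intros sg Hsg. rewrite Jfun_lt by lra. unfold Rminus. eapply Rle_trans; [apply Rabs_triang|].
    rewrite Rabs_Ropp, Rplus_comm. apply Rplus_le_compat_r, c_bound. lra.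
Qed.

Let K_bound s q (H : T1 (s, q)) : Rabs (Kext K s q) <= kernel_bound M := proj1 Kext_bound s q H.
Let BK_pos : 0 < kernel_bound M := kernel_bound_pos M M_pos.

(* Along a characteristic the line and Volterra integrals at (s + h, q + h) are
   tails of those at (s, q), and the boundary term is the same; so the kernel
   moves exactly by the head integrals over [s, s + h]. *)
Lemma Kext_characteristic_increment s q h : T1 (s, q) -> 0 <= h -> q + h <= 1 ->
  Kext K s q - Kext K (s + h) (q + h)
  = - RInt (fun th => f th (th - s + q)) s (s + h)
    + RInt (fun th => RInt (fun r => f r (th - s + q) * Kext K th r) th (th - s + q)) s (s + h).
Proof.
  intros Hsq Hh Hqh. assert (H := Hsq). unfold T1 in H; simpl in H.
  assert (Hsq2 : T1 (s + h, q + h)) by (unfold T1; simpl; lra).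
  rewrite (Kext_eq tau f c K K_kernel tau_pos s q Hsq), (Kext_eq tau f c K K_kernel tau_pos _ _ Hsq2).
  replace (s + h - (q + h) + 1 + tau) with (s - q + 1 + tau) by ring.
  set (Fl := fun th => f th (th - s + q)).
  set (Il := fun th => RInt (fun r => f r (th - s + q) * Kext K th r) th (th - s + q)).
  assert (Ftail : line_int f (s + h) (q + h) = RInt Fl (s + h) (s + 1 - q)).
  { unfold line_int. replace (s + h + 1 - (q + h)) with (s + 1 - q) by ring.
    apply RInt_ext. intros x _. unfold Fl. f_equal. ring. }
  assert (Itail : double_int f (Kext K) (s + h) (q + h) = RInt Il (s + h) (s + 1 - q)).
  { unfold double_int. replace (s + h + 1 - (q + h)) with (s + 1 - q) by ring.
    apply RInt_ext. intros x _. unfold Il. replace (x - (s + h) + (q + h)) with (x - s + q) by ring. reflexivity. }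
  assert (Fsplit : line_int f s q = RInt Fl s (s + h) + RInt Fl (s + h) (s + 1 - q))
    by (symmetry; apply (RInt_Chasles (V := R_CompleteNormedModule)); apply line_int_ex; auto).
  assert (Isplit : double_int f (Kext K) s q = RInt Il s (s + h) + RInt Il (s + h) (s + 1 - q))
    by (symmetry; apply (RInt_Chasles (V := R_CompleteNormedModule)); apply double_int_outer_ex; auto).
  rewrite Ftail, Itail, Fsplit, Isplit. ring.
Qed.

Lemma Kext_diagonal s q h : T1 (s, q) -> 0 <= h -> q + h <= 1 ->
  Rabs (Kext K s q - Kext K (s + h) (q + h)) <= (M + M * kernel_bound M) * h.
Proof.
  intros Hsq Hh Hqh. assert (H := Hsq). unfold T1 in H; simpl in H.
  rewrite Kext_characteristic_increment by auto.
  assert (Fhead : Rabs (RInt (fun th => f th (th - s + q)) s (s + h)) <= Rabs (s + h - s) * M).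
  { apply RInt_abs_bound; [apply line_int_ex; auto|].
    intros t Ht. rewrite Rmin_left in Ht by lra. rewrite Rmax_right in Ht by lra.
    apply f_bound. unfold T1; simpl; lra. }
  assert (Ihead : Rabs (RInt (fun th => RInt (fun r => f r (th - s + q) * Kext K th r) th (th - s + q)) s (s + h))
                  <= Rabs (s + h - s) * (M * kernel_bound M)).
  { apply RInt_abs_bound; [apply double_int_outer_ex; auto|].
    intros t Ht. rewrite Rmin_left in Ht by lra. rewrite Rmax_right in Ht by lra.
    apply double_int_inner_bound; auto; try lra. intros r Hr. apply K_bound. unfold T1; simpl; lra. }
  replace (s + h - s) with h in Fhead, Ihead by ring. rewrite (Rabs_right h) in Fhead, Ihead by lra.
  eapply Rle_trans; [apply Rabs_triang|]. rewrite Rabs_Ropp. lra.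
Qed.

Hypothesis c_end : c 1 = 0.

Let c_lip := C1_1_lipschitz c dc M c_C1 c_norm.

(* Near sigma = 1 the trace is small, since c(1) = 0 and the integration
   interval [sigma, 1] is short. *)
Lemma Jext_near_one x : 0 <= x < 1 ->
  Rabs (Jfun (Kext K) c x) <= (kernel_bound M * M + M) * (1 - x).
Proof.
  intros Hx. rewrite Jfun_lt by lra. unfold Rminus at 1. eapply Rle_trans; [apply Rabs_triang|].
  assert (X1 : Rabs (RInt (fun q => Kext K x q * c q) x 1) <= Rabs (1 - x) * (kernel_bound M * M)).
  { apply RInt_abs_bound; [apply row_int_ex; auto|].
    intros t Ht. rewrite Rmin_left in Ht by lra. rewrite Rmax_right in Ht by lra.
    rewrite Rabs_mult. apply Rmult_le_compat; try apply Rabs_pos; [apply K_bound; unfold T1; simpl; lra|apply c_bound; lra]. }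
  assert (X2 : Rabs (- c x) <= M * (1 - x)).
  { rewrite Rabs_Ropp. replace (c x) with (c x - c 1) by (rewrite c_end; ring).
    eapply Rle_trans; [apply c_lip; lra|]. rewrite Rabs_left1 by lra. lra. }
  rewrite (Rabs_right (1 - x)) in X1 by lra. lra.
Qed.

(* Shifting sigma by h: after the substitution q = u + h the two integrals
   differ by the diagonal increment of K, the increment of c, and a short
   piece of length h near 1. *)
Lemma Jext_shift x h : 0 <= x -> 0 <= h -> x + h < 1 ->
  Rabs (Jfun (Kext K) c x - Jfun (Kext K) c (x + h)) <= trace_lip M * h.
Proof.
  intros Hx Hh Hxh. rewrite Jfun_shift by auto.
  set (BK := kernel_bound M) in *.
  assert (X1 : Rabs (RInt (fun q => Kext K x q * c q - Kext K (x + h) (q + h) * c (q + h)) x (1 - h))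
               <= Rabs (1 - h - x) * ((M + M * BK) * h * M + BK * (M * h))).
  { apply RInt_abs_bound; [apply shifted_row_int_ex; auto|].
    intros t Ht. rewrite Rmin_left in Ht by lra. rewrite Rmax_right in Ht by lra.
    replace (Kext K x t * c t - Kext K (x + h) (t + h) * c (t + h)) with
      ((Kext K x t - Kext K (x + h) (t + h)) * c t + Kext K (x + h) (t + h) * (c t - c (t + h))) by ring.
    eapply Rle_trans; [apply Rabs_triang|]. rewrite !Rabs_mult. apply Rplus_le_compat.
    - apply Rmult_le_compat; try apply Rabs_pos;
        [apply Kext_diagonal; [unfold T1; simpl; lra|lra|lra]|apply c_bound; lra].
    - apply Rmult_le_compat; try apply Rabs_pos; [apply K_bound; unfold T1; simpl; lra|].
      eapply Rle_trans; [apply c_lip; lra|].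
      replace (t - (t + h)) with (- h) by ring. rewrite Rabs_Ropp, Rabs_right by lra. lra. }
  assert (X2 : Rabs (RInt (fun q => Kext K x q * c q) (1 - h) 1) <= Rabs (1 - (1 - h)) * (BK * M)).
  { apply RInt_abs_bound; [apply row_int_ex; auto|].
    intros t Ht. rewrite Rmin_left in Ht by lra. rewrite Rmax_right in Ht by lra.
    rewrite Rabs_mult. apply Rmult_le_compat; try apply Rabs_pos; [apply K_bound; unfold T1; simpl; lra|apply c_bound; lra]. }
  assert (X3 : Rabs (c x - c (x + h)) <= M * h).
  { eapply Rle_trans; [apply c_lip; lra|].
    replace (x - (x + h)) with (- h) by ring. rewrite Rabs_Ropp, Rabs_right by lra. lra. }
  replace (1 - (1 - h)) with h in X2 by ring. rewrite (Rabs_right h) in X2 by lra.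
  rewrite (Rabs_right (1 - h - x)) in X1 by lra.
  assert (Q : (1 - h - x) * ((M + M * BK) * h * M + BK * (M * h)) <= (M + M * BK) * h * M + BK * (M * h)).
  { assert (0 <= (M + M * BK) * h * M) by (apply Rmult_le_pos; [apply Rmult_le_pos; nra|lra]).
    assert (0 <= BK * (M * h)) by (apply Rmult_le_pos; nra). nra. }
  unfold Rminus at 1. eapply Rle_trans; [apply Rabs_triang|]. rewrite Rabs_Ropp.
  eapply Rle_trans; [apply Rplus_le_compat_r, Rabs_triang|]. unfold trace_lip. fold BK. nra.
Qed.

Lemma Jext_lipschitz x y : 0 <= x -> 0 <= y ->
  Rabs (Jfun (Kext K) c x - Jfun (Kext K) c y) <= trace_lip M * Rabs (x - y).
Proof.
  assert (Ordered : forall x y, 0 <= x <= y ->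
            Rabs (Jfun (Kext K) c x - Jfun (Kext K) c y) <= trace_lip M * (y - x)).
  { intros u v Huv. destruct (Rlt_dec v 1) as [Hv|Hv].
    - replace v with (u + (v - u)) at 1 by ring. apply Jext_shift; lra.
    - rewrite (Jfun_vanish _ _ v), Rminus_0_r by lra.
      destruct (Rlt_dec u 1) as [Hu|Hu].
      + eapply Rle_trans; [apply Jext_near_one; lra|].
        assert (HM' : kernel_bound M * M + M <= trace_lip M).
        { unfold trace_lip. assert (HB := BK_pos). assert (0 < M * kernel_bound M) by nra.
          assert (0 < M * (M + M * kernel_bound M)) by nra. nra. }
        apply Rmult_le_compat; try lra. assert (HB := BK_pos). nra.
      + rewrite Jfun_vanish, Rabs_R0 by lra. assert (H := trace_lip_pos M M_pos). nra. }
  intros Hx Hy. destruct (Rle_dec x y).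
  - rewrite (Rabs_left1 (x - y)), Ropp_minus_distr by lra. apply Ordered; lra.
  - rewrite (Rabs_minus_sym (Jfun (Kext K) c x)), (Rabs_right (x - y)) by lra. apply Ordered; lra.
Qed.

End KernelEstimates.

Lemma line_int_minus f g s q : cont2 f -> cont2 g ->
  line_int f s q - line_int g s q = line_int (fun x y => f x y - g x y) s q.
Proof.
  intros Hf Hg. unfold line_int. symmetry.
  exact (RInt_minus (V := R_CompleteNormedModule) _ _ _ _ (line_int_ex f s q _ _ Hf) (line_int_ex g s q _ _ Hg)).
Qed.

Lemma double_int_split a1 a2 X1 X2 s q : cont2 a1 -> cont2 a2 -> cont2 X1 -> cont2 X2 ->
  double_int a1 X1 s q - double_int a2 X2 s q
  = double_int a1 (fun x y => X1 x y - X2 x y) s q + double_int (fun x y => a1 x y - a2 x y) X2 s q.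
Proof.
  intros Ha1 Ha2 HX1 HX2. unfold double_int.
  assert (HX : cont2 (fun x y => X1 x y - X2 x y)) by (apply cont2_minus; auto).
  assert (Ha : cont2 (fun x y => a1 x y - a2 x y)) by (apply cont2_minus; auto).
  assert (Lin : forall (F1 F2 G1 G2 : R -> R) u v,
            ex_RInt F1 u v -> ex_RInt F2 u v -> ex_RInt G1 u v -> ex_RInt G2 u v ->
            (forall x, F1 x - F2 x = G1 x + G2 x) ->
            RInt F1 u v - RInt F2 u v = RInt G1 u v + RInt G2 u v).
  { intros F1 F2 G1 G2 u v E1 E2 E3 E4 Hpt.
    assert (Hm := RInt_minus (V := R_CompleteNormedModule) _ _ _ _ E1 E2).
    assert (Hp := RInt_plus (V := R_CompleteNormedModule) _ _ _ _ E3 E4).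
    unfold minus, plus, opp in Hm, Hp; simpl in Hm, Hp. unfold Rminus. rewrite <- Hm, <- Hp.
    apply RInt_ext. intros x _. rewrite <- Hpt. reflexivity. }
  apply Lin; [apply (double_int_outer_ex a1 X1)|apply (double_int_outer_ex a2 X2)
              |apply (double_int_outer_ex a1 (fun x y => X1 x y - X2 x y))
              |apply (double_int_outer_ex (fun x y => a1 x y - a2 x y) X2)|]; auto.
  intros th.
  apply Lin; [apply (double_int_inner_ex a1 X1)|apply (double_int_inner_ex a2 X2)
              |apply (double_int_inner_ex a1 (fun x y => X1 x y - X2 x y))
              |apply (double_int_inner_ex (fun x y => a1 x y - a2 x y) X2)|]; auto.
  intros r. ring.
Qed.

Section KernelDifference.

Variables (tau1 tau2 M d : R) (f1 f1s f1q f2 f2s f2q : R -> R -> R)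
          (c1 dc1 c2 dc2 : R -> R) (K1 K2 : R -> R -> R).
Hypothesis tau1_pos : 0 < tau1.
Hypothesis tau2_pos : 0 < tau2.
Hypothesis M_pos : 0 < M.
Hypothesis f1_C1 : C1_2 f1 f1s f1q.
Hypothesis f2_C1 : C1_2 f2 f2s f2q.
Hypothesis c1_C1 : C1_1 c1 dc1.
Hypothesis c2_C1 : C1_1 c2 dc2.
Hypothesis c2_end : c2 1 = 0.
Hypothesis f1_norm : C1_norm_le_T1 f1 f1s f1q M.
Hypothesis f2_norm : C1_norm_le_T1 f2 f2s f2q M.
Hypothesis c1_norm : C1_norm_le_01 c1 dc1 M.
Hypothesis c2_norm : C1_norm_le_01 c2 dc2 M.
Hypothesis K1_kernel : is_kernel tau1 f1 c1 K1.
Hypothesis K2_kernel : is_kernel tau2 f2 c2 K2.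
Hypothesis tau_close : Rabs (tau1 - tau2) <= d.
Hypothesis f_close : forall s q, T1 (s, q) -> Rabs (f1 s q - f2 s q) <= d.
Hypothesis c_close : forall x, 0 <= x <= 1 -> Rabs (c1 x - c2 x) <= d.

Let f1_cont : cont2 f1 := C1_2_cont2 f1 f1s f1q f1_C1.
Let f2_cont : cont2 f2 := C1_2_cont2 f2 f2s f2q f2_C1.
Let c1_cont : forall x, contR c1 x := C1_1_contR c1 dc1 c1_C1.
Let c2_cont : forall x, contR c2 x := C1_1_contR c2 dc2 c2_C1.
Let K1_cont : cont2 (Kext K1) := Kext_cont2 K1 (proj1 K1_kernel).
Let K2_cont : cont2 (Kext K2) := Kext_cont2 K2 (proj1 K2_kernel).

Definition Kdiff s q := Kext K1 s q - Kext K2 s q.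
Definition Jdiff u := Jfun (Kext K1) c1 u - Jfun (Kext K2) c2 u.

Definition diff_source := d * (1 + kernel_bound M + trace_lip M).

Let Kdiff_cont : cont2 Kdiff := cont2_minus _ _ K1_cont K2_cont.
Let d_nonneg : 0 <= d := Rle_trans _ _ _ (Rabs_pos _) tau_close.
Let K2_bound := proj1 (Kext_bound tau2 M f2 f2s f2q c2 dc2 K2 tau2_pos M_pos f2_C1 c2_C1 f2_norm c2_norm K2_kernel).
Let J2_lip := Jext_lipschitz tau2 M f2 f2s f2q c2 dc2 K2 tau2_pos M_pos f2_C1 c2_C1 f2_norm c2_norm K2_kernel c2_end.

(* Subtracting the two kernel equations: the forcing terms differ by at most
   d, the Volterra terms by the Volterra term of Kdiff plus d * kernel_bound M,
   and the boundary terms by Jdiff plus the Lipschitz variation of J2 under the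
   change of delay. *)
Lemma Kdiff_ineq s q : T1 (s, q) ->
  Rabs (Kdiff s q) <= diff_source + Rabs (double_int f1 Kdiff s q) + Rabs (Jdiff (s - q + 1 + tau1)).
Proof.
  intros Hsq. assert (H := Hsq). unfold T1 in H; simpl in H.
  assert (HBK := kernel_bound_pos M M_pos). assert (HL := trace_lip_pos M M_pos).
  unfold Kdiff at 1.
  rewrite (Kext_eq tau1 f1 c1 K1 K1_kernel tau1_pos s q Hsq), (Kext_eq tau2 f2 c2 K2 K2_kernel tau2_pos s q Hsq).
  assert (Hdf : cont2 (fun x y => f1 x y - f2 x y)) by (apply cont2_minus; auto).
  assert (Hline : Rabs (line_int (fun x y => f1 x y - f2 x y) s q) <= d)
    by (apply line_int_bound; auto).
  assert (Hvol : Rabs (double_int (fun x y => f1 x y - f2 x y) (Kext K2) s q) <= d * kernel_bound M)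
    by (apply double_int_bound; auto; lra).
  assert (Hdelay : Rabs (Jfun (Kext K2) c2 (s - q + 1 + tau1) - Jfun (Kext K2) c2 (s - q + 1 + tau2))
                   <= trace_lip M * d).
  { eapply Rle_trans; [apply J2_lip; lra|].
    replace (s - q + 1 + tau1 - (s - q + 1 + tau2)) with (tau1 - tau2) by ring.
    apply Rmult_le_compat_l; lra. }
  assert (Hsplit := double_int_split f1 f2 (Kext K1) (Kext K2) s q f1_cont f2_cont K1_cont K2_cont).
  assert (Hlin := line_int_minus f1 f2 s q f1_cont f2_cont).
  fold Kdiff in Hsplit. unfold Jdiff.
  match goal with |- Rabs ?e <= _ => replace e with
    (- line_int (fun x y => f1 x y - f2 x y) s q + double_int f1 Kdiff s q
     + double_int (fun x y => f1 x y - f2 x y) (Kext K2) s q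
     + (Jfun (Kext K1) c1 (s - q + 1 + tau1) - Jfun (Kext K2) c2 (s - q + 1 + tau1))
     + (Jfun (Kext K2) c2 (s - q + 1 + tau1) - Jfun (Kext K2) c2 (s - q + 1 + tau2))) by lra end.
  unfold diff_source.
  eapply Rle_trans; [apply Rabs_triang|]. eapply Rle_trans; [apply Rplus_le_compat_r, Rabs_triang|].
  eapply Rle_trans; [apply Rplus_le_compat_r, Rplus_le_compat_r, Rabs_triang|].
  eapply Rle_trans; [apply Rplus_le_compat_r, Rplus_le_compat_r, Rplus_le_compat_r, Rabs_triang|].
  rewrite Rabs_Ropp. lra.
Qed.

(* Subtracting the two traces: J1 - J2 = int Kdiff c1 + int K2 (c1 - c2) - (c1 - c2). *)
Lemma Jdiff_ineq sg : 0 <= sg < 1 ->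
  Rabs (Jdiff sg) <= diff_source + Rabs (RInt (fun th => Kdiff sg th * c1 th) sg 1).
Proof.
  intros Hsg. assert (HBK := kernel_bound_pos M M_pos). assert (HL := trace_lip_pos M M_pos).
  unfold Jdiff. rewrite !Jfun_lt by lra.
  assert (Hc : forall x, contR (fun th => c1 th - c2 th) x) by (intros; apply contR_minus; auto).
  assert (Esplit : RInt (fun q => Kext K1 sg q * c1 q) sg 1 - RInt (fun q => Kext K2 sg q * c2 q) sg 1
                   = RInt (fun th => Kdiff sg th * c1 th) sg 1 + RInt (fun th => Kext K2 sg th * (c1 th - c2 th)) sg 1).
  { rewrite <- (RInt_minus (V := R_CompleteNormedModule)) by (apply row_int_ex; auto).
    rewrite <- (RInt_plus (V := R_CompleteNormedModule)) by (apply row_int_ex; auto).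
    apply RInt_ext. intros x _. unfold Kdiff, minus, plus, opp; simpl. ring. }
  assert (Hcd : Rabs (RInt (fun th => Kext K2 sg th * (c1 th - c2 th)) sg 1) <= kernel_bound M * d).
  { eapply Rle_trans; [apply (RInt_abs_bound _ _ _ (kernel_bound M * d)); [apply row_int_ex; auto|]|].
    - intros t Ht. rewrite Rmin_left in Ht by lra. rewrite Rmax_right in Ht by lra.
      rewrite Rabs_mult. apply Rmult_le_compat; try apply Rabs_pos; [apply K2_bound; unfold T1; simpl; lra|apply c_close; lra].
    - rewrite Rabs_right by lra. assert (0 <= kernel_bound M * d) by nra. nra. }
  assert (Hc0 : Rabs (c1 sg - c2 sg) <= d) by (apply c_close; lra).
  replace (RInt (fun q => Kext K1 sg q * c1 q) sg 1 - c1 sg - (RInt (fun q => Kext K2 sg q * c2 q) sg 1 - c2 sg))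
    with (RInt (fun th => Kdiff sg th * c1 th) sg 1 + RInt (fun th => Kext K2 sg th * (c1 th - c2 th)) sg 1
          - (c1 sg - c2 sg)) by lra.
  unfold Rminus at 1. eapply Rle_trans; [apply Rabs_triang|]. rewrite Rabs_Ropp.
  eapply Rle_trans; [apply Rplus_le_compat_r, Rabs_triang|].
  unfold diff_source. assert (0 <= d * trace_lip M) by nra. nra.
Qed.

Theorem kernel_difference_bound :
  (forall s q, T1 (s, q) -> Rabs (Kdiff s q) <= diff_source * Gam M) /\
  (forall u, 0 <= u -> Rabs (Jdiff u) <= diff_source * Gam M).
Proof.
  pose proof (Kext_bound tau1 M f1 f1s f1q c1 dc1 K1 tau1_pos M_pos f1_C1 c1_C1 f1_norm c1_norm K1_kernel)
    as [B1K B1J].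
  pose proof (Kext_bound tau2 M f2 f2s f2q c2 dc2 K2 tau2_pos M_pos f2_C1 c2_C1 f2_norm c2_norm K2_kernel)
    as [B2K B2J].
  assert (HBK := kernel_bound_pos M M_pos). assert (HL := trace_lip_pos M M_pos).
  apply (weighted_gronwall Kdiff f1 Jdiff c1 diff_source M tau1 (2 * kernel_bound M)); auto; try lra.
  - unfold diff_source. apply Rmult_le_pos; lra.
  - intros s q H. apply (f1_norm s q H).
  - intros x H. apply (c1_norm x H).
  - intros u Hu. unfold Jdiff. rewrite !Jfun_vanish by lra. ring.
  - intros s q H. unfold Kdiff. unfold Rminus. eapply Rle_trans; [apply Rabs_triang|]. rewrite Rabs_Ropp.
    assert (X1 := B1K s q H). assert (X2 := B2K s q H). lra.
  - intros u Hu. unfold Jdiff. unfold Rminus. eapply Rle_trans; [apply Rabs_triang|]. rewrite Rabs_Ropp.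
    assert (X1 := B1J u ltac:(lra)). assert (X2 := B2J u ltac:(lra)). lra.
  - apply Kdiff_ineq.
  - apply Jdiff_ineq.
Qed.

End KernelDifference.

(* L samples J at phi + eta: its variation is that of J plus the variation of
   J2 under the change of shift eta. *)
Lemma Lfun_difference_bound K1 K2 c1 c2 eta1 eta2 LJ L0 d :
  0 <= eta1 -> 0 <= eta2 -> 0 <= LJ -> 0 <= L0 -> 0 <= d -> Rabs (eta1 - eta2) <= d ->
  (forall u, 0 <= u -> Rabs (Jfun K1 c1 u - Jfun K2 c2 u) <= LJ * d) ->
  (forall x y, 0 <= x -> 0 <= y -> Rabs (Jfun K2 c2 x - Jfun K2 c2 y) <= L0 * Rabs (x - y)) ->
  forall phi, 0 <= phi -> Rabs (Lfun K1 c1 eta1 phi - Lfun K2 c2 eta2 phi) <= (LJ + L0) * d.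
Proof.
  intros He1 He2 HLJ HL0 Hd Heta HJ Hlip phi Hphi. unfold Lfun. destruct (Rlt_dec phi 1).
  - assert (Hshift := Hlip (phi + eta1) (phi + eta2) ltac:(lra) ltac:(lra)).
    replace (phi + eta1 - (phi + eta2)) with (eta1 - eta2) in Hshift by ring.
    assert (L0 * Rabs (eta1 - eta2) <= L0 * d) by (apply Rmult_le_compat_l; lra).
    assert (Hj := HJ (phi + eta1) ltac:(lra)).
    replace (Jfun K1 c1 (phi + eta1) - Jfun K2 c2 (phi + eta2)) with
      ((Jfun K1 c1 (phi + eta1) - Jfun K2 c2 (phi + eta1))
       + (Jfun K2 c2 (phi + eta1) - Jfun K2 c2 (phi + eta2))) by ring.
    eapply Rle_trans; [apply Rabs_triang|]. lra.
  - rewrite Rminus_0_r, Rabs_R0. apply Rmult_le_pos; lra.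
Qed.

(* Main theorem, with LK = LJ = (1 + kernel_bound M + trace_lip M) * Gam M and
   LL = LK + trace_lip M; the constants depend on M only, not on taubar. *)
Theorem lemma1 :
  forall taubar M : R, 0 < taubar -> 0 < M ->
  exists LK LJ LL : R, 0 < LK /\ 0 < LJ /\ 0 < LL /\
  forall (tau1 tau2 eta1 eta2 : R)
         (f1 f1s f1q f2 f2s f2q : R -> R -> R)
         (c1 dc1 c2 dc2 : R -> R)
         (K1 K2 : R -> R -> R),
    0 < tau1 <= taubar -> 0 < tau2 <= taubar ->
    0 < eta1 < tau1 -> 0 < eta2 < tau2 ->
    C1_2 f1 f1s f1q -> C1_2 f2 f2s f2q ->
    C1_1 c1 dc1 -> C1_1 c2 dc2 -> c1 1 = 0 -> c2 1 = 0 ->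
    C1_norm_le_T1 f1 f1s f1q M -> C1_norm_le_T1 f2 f2s f2q M ->
    C1_norm_le_01 c1 dc1 M -> C1_norm_le_01 c2 dc2 M ->
    is_kernel tau1 f1 c1 K1 -> is_kernel tau2 f2 c2 K2 ->
    (* d dominates every quantity inside the max on the right-hand sides *)
    forall d : R,
      Rabs (tau1 - tau2) <= d ->
      (forall s q, T1 (s, q) -> Rabs (f1 s q - f2 s q) <= d) ->
      (forall x, 0 <= x <= 1 -> Rabs (c1 x - c2 x) <= d) ->
      (forall s q, T1 (s, q) -> Rabs (K1 s q - K2 s q) <= LK * d) /\
      (Rabs (eta1 - eta2) <= d ->
       forall phi, 0 <= phi <= 1 ->
         Rabs (Lfun K1 c1 eta1 phi - Lfun K2 c2 eta2 phi) <= LL * d) /\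
      (forall sigma, 0 <= sigma <= 1 ->
         Rabs (Jfun K1 c1 sigma - Jfun K2 c2 sigma) <= LJ * d).
Proof.
  intros taubar M _ HM.
  assert (HBK := kernel_bound_pos M HM). assert (HL0 := trace_lip_pos M HM).
  set (LK := (1 + kernel_bound M + trace_lip M) * Gam M).
  assert (HLK : 0 < LK) by (apply Rmult_lt_0_compat; [lra|apply Gam_pos; lra]).
  exists LK, LK, (LK + trace_lip M). split; [exact HLK|split; [exact HLK|split; [lra|]]].
  intros tau1 tau2 eta1 eta2 f1 f1s f1q f2 f2s f2q c1 dc1 c2 dc2 K1 K2
    Ht1 Ht2 He1 He2 Hf1 Hf2 Hc1 Hc2 _ Hc2end Hf1M Hf2M Hc1M Hc2M HK1 HK2 d Htd Hfd Hcd.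
  assert (Hd : 0 <= d) by (eapply Rle_trans; [apply Rabs_pos|exact Htd]).
  destruct (kernel_difference_bound tau1 tau2 M d f1 f1s f1q f2 f2s f2q c1 dc1 c2 dc2 K1 K2
              (proj1 Ht1) (proj1 Ht2) HM Hf1 Hf2 Hc1 Hc2 Hc2end Hf1M Hf2M Hc1M Hc2M HK1 HK2 Htd Hfd Hcd)
    as [Kbound Jbound].
  replace (diff_source M d * Gam M) with (LK * d) in Kbound, Jbound by (unfold diff_source, LK; ring).
  unfold Kdiff, Jdiff in Kbound, Jbound.
  assert (HJ : forall u, 0 <= u -> Rabs (Jfun K1 c1 u - Jfun K2 c2 u) <= LK * d)
    by (intros u Hu; rewrite <- (Jfun_Kext K1 c1 u), <- (Jfun_Kext K2 c2 u) by exact Hu; apply Jbound, Hu).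
  assert (Hlip : forall x y, 0 <= x -> 0 <= y ->
                   Rabs (Jfun K2 c2 x - Jfun K2 c2 y) <= trace_lip M * Rabs (x - y)).
  { intros x y Hx Hy. rewrite <- (Jfun_Kext K2 c2 x), <- (Jfun_Kext K2 c2 y) by assumption.
    exact (Jext_lipschitz tau2 M f2 f2s f2q c2 dc2 K2 (proj1 Ht2) HM Hf2 Hc2 Hf2M Hc2M HK2 Hc2end x y Hx Hy). }
  split; [|split].
  - intros s q Hsq. rewrite <- (Kext_T1 K1 s q Hsq), <- (Kext_T1 K2 s q Hsq). exact (Kbound s q Hsq).
  - intros Heta phi Hphi.
    apply (Lfun_difference_bound K1 K2 c1 c2 eta1 eta2 LK (trace_lip M) d); auto; lra.
  - intros sg Hsg. apply HJ. lra.
Qed.
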